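(* Let $G$ be a graph with $\mathrm{diam}(G)=3$ such that $D_2(G)$ is connected. Then $\mathrm{diam}(D_2(G))\leqslant 5$.
   Context: All graphs are finite, simple and undirected. For a graph $G$, $\mathrm{d}_G(x,y)$ denotes the length of a shortest path between $x$ and $y$, and $\mathrm{diam}(G)$ is the maximum distance between vertices of $G$. The $2$-distance graph $D_2(G)$ of $G$ is the graph with vertex set $V(G)$ in which two vertices $x,y$ are adjacent if and only if $\mathrm{d}_G(x,y)=2$. *)

From mathcomp Require Import all_boot.
Set Implicit Arguments. Unset Strict Implicit. Unset Printing Implicit Defensive.

Definition simple_graph (T : finType) (e : rel T) : Prop :=
  symmetric e /\ irreflexive e.

Fixpoint walk (T : Type) (R : T -> T -> Prop) (x y : T) (n : nat) : Prop :=
  match n with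
  | 0 => x = y
  | n'.+1 => exists z, R x z /\ walk R z y n'
  end.

Definition dist (T : Type) (R : T -> T -> Prop) (x y : T) (n : nat) : Prop :=
  walk R x y n /\ forall m, m < n -> ~ walk R x y m.

Definition connected_graph (T : Type) (R : T -> T -> Prop) : Prop :=
  forall x y, exists n, walk R x y n.

Definition diam_eq (T : Type) (R : T -> T -> Prop) (d : nat) : Prop :=
  (forall x y, exists2 n, dist R x y n & n <= d) /\
  (exists x y, dist R x y d).

Definition diam_le (T : Type) (R : T -> T -> Prop) (d : nat) : Prop :=
  forall x y, exists2 n, dist R x y n & n <= d.

Definition D2 (T : finType) (e : rel T) : T -> T -> Prop :=
  fun x y => dist (fun a b => e a b) x y 2.

From mathcomp Require Import all_boot zify.
From Stdlib Require Import Classical.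
Set Implicit Arguments. Unset Strict Implicit. Unset Printing Implicit Defensive.

(* Let d be the distance of G (at most 3) and δ that of D_2(G); pairs with
   d = 0 or d = 2 have δ <= 1.  If d(x,y) = 3 then δ(x,y) <= 4: otherwise the
   δ-balls of radius 2 around x and y are disjoint and cover G, so a D_2-path
   from x to y leaves the first ball along a D_2-edge st with s a neighbour of
   x and t a neighbour of y, and a common neighbour of s and t is at distance 2
   from both x and y.  For an edge uv, a vertex at distance >= 2 from both u
   and v, and at distance exactly 2 from one of them, yields a D_2-path of
   length <= 5 through it.  If there is no such vertex, every vertex is equal
   or adjacent to u or v; then the first vertex t of a D_2-path from u to v
   outside the δ-ball of radius 2 around u is adjacent to u and to v, and
   within distance 1 of both ends of any pair at distance 3, contradicting
   diam G = 3. *)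

Section Walks.
Variables (T : Type) (R : T -> T -> Prop).

Lemma walk_rcons x y z n : walk R x y n -> R y z -> walk R x z n.+1.
Proof.
elim: n x => [|n IHn] x /=; first by move=> -> Ryz; exists z.
by case=> w [Rxw Wwy] Ryz; exists w; split; last exact: IHn.
Qed.

Lemma walk_cat x y z m n : walk R x y m -> walk R y z n -> walk R x z (m + n).
Proof.
elim: m x => [|m IHm] x /=; first by move=> ->.
by case=> w [Rxw Wwy] Wyz; exists w; split; last exact: IHm.
Qed.

Lemma walk_sym x y n :
  (forall a b, R a b -> R b a) -> walk R x y n -> walk R y x n.
Proof.
move=> Rsym; elim: n x => [|n IHn] x /=; first by move->.
by case=> w [Rxw Wwy]; apply: walk_rcons (IHn _ Wwy) (Rsym _ _ Rxw).
Qed.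

Lemma walk_cross (P : T -> Prop) x y n :
  walk R x y n -> P x -> ~ P y -> exists s t, [/\ P s, ~ P t & R s t].
Proof.
elim: n x => [|n IHn] x /=; first by move->.
case=> w [Rxw Wwy] Px NPy.
by have [Pw|NPw] := classic (P w); [exact: IHn Pw NPy | exists x, w].
Qed.

Definition dist_le x y k := exists2 m, m <= k & walk R x y m.

Lemma dist_le_refl x k : dist_le x x k.
Proof. by exists 0. Qed.

Lemma dist_le1 x y : R x y -> dist_le x y 1.
Proof. by move=> Rxy; exists 1 => //=; exists y. Qed.

Lemma dist_le_widen x y k l : dist_le x y k -> k <= l -> dist_le x y l.
Proof. by move=> [m lemk Wm] lekl; exists m => //; apply: leq_trans lekl. Qed.

Lemma dist_le_trans x y z i j :
  dist_le x y i -> dist_le y z j -> dist_le x z (i + j).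
Proof. by case=> m ? Wm [n ? Wn]; exists (m + n); [apply: leq_add | apply: walk_cat Wm Wn]. Qed.

Lemma dist_le_sym x y k :
  (forall a b, R a b -> R b a) -> dist_le x y k -> dist_le y x k.
Proof. by move=> Rsym [m lemk Wm]; exists m => //; apply: walk_sym. Qed.

Lemma dist_le_dist x y k : dist_le x y k -> exists2 n, dist R x y n & n <= k.
Proof.
case=> m lemk; elim/ltn_ind: m lemk => m IHm lemk Wm.
have [[j ltjm Wj]|shortest] := classic (exists2 j, j < m & walk R x y j).
  exact: IHm j ltjm (leq_trans (ltnW ltjm) lemk) Wj.
by exists m => //; split=> // j ltjm Wj; apply: shortest; exists j.
Qed.

End Walks.

Section TruncatedDistance.
Variables (T : finType) (e : rel T).
Hypothesis esym : symmetric e.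

Local Notation edge := (fun a b : T => is_true (e a b)).

Definition dist3 x y : nat :=
  if x == y then 0 else if e x y then 1
  else if [exists w, e x w && e w y] then 2 else 3.

Local Notation d := dist3.

Lemma adj_sym x y : e x y -> e y x.
Proof. by rewrite esym. Qed.

Lemma dist3_le3 x y : d x y <= 3.
Proof. by rewrite /d; repeat case: ifP. Qed.

Lemma dist3_sym x y : d x y = d y x.
Proof.
have common : [exists w, e x w && e w y] = [exists w, e y w && e w x].
  by apply/existsP/existsP => -[w /andP[e1 e2]]; exists w; rewrite esym e2 esym e1.
by rewrite /d eq_sym [e x y]esym common.
Qed.

Lemma dist3_adjr x y z : e y z -> d x z <= (d x y).+1.
Proof.
move=> eyz; rewrite /d; have [->|_] := eqVneq x y; first by rewrite eyz; case: ifP.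
case exy: (e x y); last by repeat case: ifP.
have -> : [exists w, e x w && e w z] by apply/existsP; exists y; rewrite exy eyz.
by repeat case: ifP.
Qed.

Lemma dist3_walk_le x y z n : walk edge y z n -> d x z <= d x y + n.
Proof.
elim: n y => [|n IHn] y /=; first by move->; rewrite addn0.
case=> w [eyw Wwz]; apply: leq_trans (IHn _ Wwz) _.
by rewrite addnS -addSn leq_add2r dist3_adjr.
Qed.

Lemma dist3_le_walk x y n : walk edge x y n -> d x y <= n.
Proof. by move/(dist3_walk_le x); rewrite /d eqxx. Qed.

Lemma dist3_le1 x y : e x y -> d x y <= 1.
Proof. by move=> exy; apply: dist3_le_walk; exists y. Qed.

Lemma dist3_le2 x w y : e x w -> e w y -> d x y <= 2.
Proof. by move=> exw ewy; apply: dist3_le_walk; exists w; split=> //; exists y. Qed.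

Lemma dist3_walk x y : d x y < 3 -> walk edge x y (d x y).
Proof.
rewrite /d; case: eqP => [->|_] //; case: ifP => [exy _|_]; first by exists y.
by case: ifP => // /existsP[w /andP[exw ewy]] _; exists w; split=> //; exists y.
Qed.

Lemma dist3_eq0 x y : d x y = 0 -> x = y.
Proof. by move=> dxy; have := dist3_walk (x:=x) (y:=y); rewrite dxy; apply. Qed.

Lemma dist3_eq1 x y : d x y = 1 -> e x y.
Proof.
by move=> dxy; have := dist3_walk (x:=x) (y:=y); rewrite dxy => /(_ isT)[z [? <-]].
Qed.

Lemma dist3_eq2 x y : d x y = 2 -> exists2 w, e x w & e w y.
Proof.
move=> dxy; have := dist3_walk (x:=x) (y:=y); rewrite dxy.
by case=> // w [? [z [? <-]]]; exists w.
Qed.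

Lemma dist3_adjl x x' y : e x x' -> d x y <= (d x' y).+1.
Proof. by move=> exx'; rewrite dist3_sym (dist3_sym x'); apply: dist3_adjr; rewrite esym. Qed.

Lemma dist3_triangle x y z : d x z <= d x y + d y z.
Proof.
have [ltyz|] := ltnP (d y z) 3; first exact/dist3_walk_le/dist3_walk.
by move=> le3; apply: leq_trans (dist3_le3 _ _) (leq_trans le3 (leq_addl _ _)).
Qed.

Lemma dist3_dist x y n : dist edge x y n -> d x y = minn n 3.
Proof.
case=> Wn shortest; have := dist3_le_walk Wn; have := dist3_le3 x y.
have [ltd3|] := ltnP (d x y) 3; last by lia.
have : ~ d x y < n by move=> ltdn; apply: shortest ltdn (dist3_walk ltd3).
by lia.
Qed.

Lemma D2_dist3 x y : D2 e x y <-> d x y = 2.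
Proof.
split=> [/dist3_dist -> //|dxy]; split; first by rewrite -dxy; apply: dist3_walk; rewrite dxy.
by move=> m ltm2 /dist3_le_walk; rewrite dxy; lia.
Qed.

Local Notation dD2 := (dist_le (D2 e)).

Lemma dD2_sym x y k : dD2 x y k -> dD2 y x k.
Proof. by apply: dist_le_sym => a b; rewrite !D2_dist3 dist3_sym. Qed.

Lemma dD2_edge x y : d x y = 2 -> dD2 x y 1.
Proof. by move/D2_dist3; apply: dist_le1. Qed.

Lemma dD2_le1 x y : d x y = 0 \/ d x y = 2 -> dD2 x y 1.
Proof. by case=> [/dist3_eq0 -> | /dD2_edge //]; apply: dist_le_refl. Qed.

Lemma dD2_cons x y z k : d x y = 2 -> dD2 y z k -> dD2 x z k.+1.
Proof. by move=> dxy; apply: dist_le_trans (dD2_edge dxy). Qed.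

Section DiameterThree.
Hypothesis diam3 : diam_le edge 3.

Lemma dist3_geodesic x y : d x y = 3 -> exists p q, [/\ e x p, e p q & e q y].
Proof.
move=> dxy; have [n Dn len3] := diam3 x y.
have n3 : n = 3 by move: (dist3_dist Dn); rewrite dxy; lia.
by case: Dn; rewrite n3 => -[p [exp [q [epq [z [eqz <-]]]]]] _; exists p, q.
Qed.

(* A would-be counterexample to [dD2_le4]. *)
Definition stretched x y := d x y = 3 /\ ~ dD2 x y 4.

Lemma stretched_sym x y : stretched x y -> stretched y x.
Proof. by case=> dxy far; split=> [|/dD2_sym//]; rewrite dist3_sym. Qed.

Lemma stretched_nbr x y v : stretched x y -> e x v -> d v y = 3 -> dD2 x v 2.
Proof.
move=> [dxy far] exv dvy; have [p [q [evp epq eqy]]] := dist3_geodesic dvy.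
have dpy : d p y = 2.
  by have := dist3_adjl y evp; have := dist3_le2 epq eqy; lia.
have exp : e x p.
  apply: dist3_eq1; have : d x p <> 2.
    by move=> dxp; apply: far; apply: dist_le_widen (dD2_cons dxp (dD2_edge dpy)) _.
  by have := dist3_le2 exv evp; have := dist3_triangle x p y; lia.
have dxq : d x q = 2 by have := dist3_le2 exp epq; have := dist3_adjr x eqy; lia.
have dvq : d v q = 2 by have := dist3_le2 evp epq; have := dist3_adjr v eqy; lia.
exact: dD2_cons dxq (dD2_sym (dD2_edge dvq)).
Qed.

Lemma stretched_far_geodesic x y v p q :
  stretched x y -> d v x = 3 -> d v y = 3 -> e v p -> e p q -> e q x ->
  [/\ d p x = 2, d p y = 3 & d v q = 2].
Proof.
move=> [dxy far] dvx dvy evp epq eqx.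
have dpx : d p x = 2 by have := dist3_le2 epq eqx; have := dist3_adjl x evp; lia.
split=> //; last by have := dist3_le2 evp epq; have := dist3_adjr v eqx; lia.
have : d p y <> 2.
  rewrite dist3_sym => dyp; apply: far; apply: dD2_sym.
  by apply: dist_le_widen (dD2_cons dyp (dD2_edge dpx)) _.
by have := dist3_le3 p y; have := dist3_adjl y evp; lia.
Qed.

Lemma stretched_no_common_far x y v :
  stretched x y -> d v x = 3 -> d v y = 3 -> False.
Proof.
move=> sxy dvx dvy; have [dxy far] := sxy.
have [p [q [evp epq eqx]]] := dist3_geodesic dvx.
have [p' [q' [evp' epq' eqy]]] := dist3_geodesic dvy.
have [dpx dpy dvq] := stretched_far_geodesic sxy dvx dvy evp epq eqx.
have [dp'y dp'x dvq'] :=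
  stretched_far_geodesic (stretched_sym sxy) dvy dvx evp' epq' eqy.
have epp' : e p p'.
  apply: dist3_eq1; have : d p p' <> 2.
    move=> dpp'; apply: far; rewrite dist3_sym in dpx.
    by apply: dist_le_widen (dD2_cons dpx (dD2_cons dpp' (dD2_edge dp'y))) _.
  have := dist3_le2 (adj_sym evp) evp'; have := dist3_triangle p' p x.
  by have := dist3_sym p p'; lia.
have dqp' : d q p' = 2.
  have := dist3_le2 (adj_sym epq) epp'; have := dist3_adjr p' eqx.
  by have := dist3_sym q p'; lia.
have dq'p : d q' p = 2.
  have := dist3_le2 (adj_sym epq') (adj_sym epp'); have := dist3_adjr p eqy.
  by have := dist3_sym q' p; lia.
have dqy : d q y = 2.
  have : d q y <> 3.
    move=> dqy; apply: far; apply: dist_le_trans (stretched_nbr sxy (adj_sym eqx) dqy) _.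
    exact: dD2_cons dqp' (dD2_edge dp'y).
  by have := dist3_le3 q y; have := dist3_adjl y (adj_sym eqx); lia.
have dxq' : d x q' = 2.
  have : d q' x <> 3.
    move=> dq'x; apply: far; apply: dD2_sym.
    apply: dist_le_trans (stretched_nbr (stretched_sym sxy) (adj_sym eqy) dq'x) _.
    exact: dD2_cons dq'p (dD2_edge dpx).
  have := dist3_le3 q' x; have := dist3_adjl x (adj_sym eqy).
  by have := dist3_sym x y; have := dist3_sym x q'; lia.
rewrite dist3_sym in dvq'; apply: far.
exact: dD2_cons dxq' (dD2_cons dvq' (dD2_cons dvq (dD2_edge dqy))).
Qed.

Lemma stretched_cases x y z : stretched x y ->
  [\/ dD2 x z 1, dD2 z y 1, e x z /\ d z y = 3 | e z y /\ d x z = 3].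
Proof.
move=> sxy; have [dxy _] := sxy.
have [/dD2_le1 xz|xz] : (d x z = 0 \/ d x z = 2) \/ (d x z = 1 \/ d x z = 3).
- by have := dist3_le3 x z; lia.
- by constructor 1.
have [/dD2_le1 zy|zy] : (d z y = 0 \/ d z y = 2) \/ (d z y = 1 \/ d z y = 3).
- by have := dist3_le3 z y; lia.
- by constructor 2.
have := dist3_triangle x z y; rewrite dxy.
case: xz => xz; case: zy => zy; rewrite xz zy // => _.
- by constructor 3; rewrite (dist3_eq1 xz).
- by constructor 4; rewrite (dist3_eq1 zy).
- by case: (stretched_no_common_far sxy _ zy); rewrite dist3_sym.
Qed.

Hypothesis D2_connected : connected_graph (D2 e).

Lemma dD2_le4 x y : d x y = 3 -> dD2 x y 4.
Proof.
move=> dxy; apply: NNPP => far; have sxy : stretched x y by split.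
have [n Wn] := D2_connected x y.
have [s [t [xs xt Dst]]] : exists s t, [/\ dD2 x s 2, ~ dD2 x t 2 & D2 e s t].
  apply: walk_cross Wn (dist_le_refl _ _ _) _ => x2y.
  by apply: far; apply: dist_le_widen x2y _.
have st : dD2 s t 1 by apply: dist_le1.
have [ety dxt] : e t y /\ d x t = 3.
  case: (stretched_cases t sxy) => [x1t|t1y|[ext dty]|//].
  - by case: xt; apply: dist_le_widen x1t _.
  - by case: far; apply: dist_le_trans xs (dist_le_trans st t1y).
  - by case: xt; apply: stretched_nbr sxy ext dty.
have [exs dsy] : e x s /\ d s y = 3.
  case: (stretched_cases s sxy) => [x1s|s1y|//|[esy dxs]].
  - by case: xt; apply: dist_le_trans x1s st.
  - by case: far; apply: dist_le_widen (dist_le_trans xs s1y) _.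
  - case: far; apply: dist_le_trans xs (dD2_sym _).
    by apply: stretched_nbr (stretched_sym sxy) (adj_sym esy) _; rewrite dist3_sym.
have [m esm emt] := dist3_eq2 (proj1 (D2_dist3 s t) Dst).
have dxm : d x m = 2 by have := dist3_le2 exs esm; have := dist3_adjr x emt; lia.
have dmy : d m y = 2 by have := dist3_le2 emt ety; have := dist3_adjl y esm; lia.
by case: far; apply: dist_le_widen (dD2_cons dxm (dD2_edge dmy)) _.
Qed.

Lemma adj_dD2_le5_through u v z : e u v -> 1 < d u z -> 1 < d v z ->
  d u z = 2 \/ d v z = 2 -> dD2 u v 5.
Proof.
move=> euv uz vz two.
have [[duz dzv]|[[duz dzv]|[duz dzv]]] : [/\ d u z = 2 & d z v = 2] \/
    [/\ d u z = 2 & d z v = 3] \/ [/\ d u z = 3 & d z v = 2].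
- have := dist3_adjl z euv; have := dist3_adjl z (adj_sym euv).
  by have := dist3_le3 u z; have := dist3_le3 v z; have := dist3_sym v z; lia.
- by apply: dist_le_widen (dD2_cons duz (dD2_edge dzv)) _.
- by apply: dD2_cons duz (dD2_le4 dzv).
- by apply: dist_le_trans (dD2_le4 duz) (dD2_edge dzv).
Qed.

Lemma adj_dD2_le5_or_dominating u v :
  e u v -> dD2 u v 5 \/ forall z, d u z <= 1 \/ d v z <= 1.
Proof.
move=> euv.
have [[z [uz vz]]|none] := classic (exists z, 1 < d u z /\ 1 < d v z); last first.
  by right=> z; apply: NNPP => notdom; apply: none; exists z; lia.
left; have [two|not2] := classic (d u z = 2 \/ d v z = 2).
  exact: adj_dD2_le5_through two.
have duz : d z u = 3 by have := dist3_le3 u z; have := dist3_sym u z; lia.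
have [r [s [ezr ers esu]]] := dist3_geodesic duz.
apply: (adj_dD2_le5_through (z := r)) => //.
- have := dist3_adjr u (adj_sym ezr); have := dist3_sym u z; lia.
- have := dist3_adjr v (adj_sym ezr); have := dist3_le3 v z; lia.
- left; have := dist3_le2 (adj_sym esu) (adj_sym ers).
  by have := dist3_adjr u (adj_sym ezr); have := dist3_sym u z; lia.
Qed.

Lemma common_nbr_dist3_le1 u v t c : e u v -> d u t = 1 -> ~ dD2 t v 2 ->
  d u c <= 1 -> 1 < d v c -> d t c <= 1.
Proof.
move=> euv dut tv uc vc; rewrite leqNgt; apply/negP => tc.
have [dtc dcv] : d t c = 2 /\ d c v = 2.
  have := dist3_adjl c (adj_sym euv); have := dist3_sym v c.
  by have := dist3_triangle t u c; have := dist3_sym u t; lia.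
by case: tv; apply: dD2_cons dtc (dD2_edge dcv).
Qed.

Lemma dominating_adj_dD2_le5 u v a b : e u v ->
  (forall z, d u z <= 1 \/ d v z <= 1) -> d a b = 3 -> dD2 u v 5.
Proof.
move=> euv dom dab; apply: NNPP => far; have [n Wn] := D2_connected u v.
have [s [t [us ut Dst]]] : exists s t, [/\ dD2 u s 2, ~ dD2 u t 2 & D2 e s t].
  apply: walk_cross Wn (dist_le_refl _ _ _) _ => u2v.
  by apply: far; apply: dist_le_widen u2v _.
have tv : ~ dD2 t v 2.
  by move=> t2v; apply: far; apply: dist_le_trans us (dist_le_trans (dist_le1 Dst) t2v).
have tu : ~ dD2 t u 2 by move/dD2_sym.
have odd_dist w w' : ~ dD2 w w' 2 -> d w w' <> 0 /\ d w w' <> 2.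
  by move=> ww'; split=> dww'; apply: ww'; apply: dist_le_widen (dD2_le1 _) _; auto.
have [dut dvt] : d u t = 1 /\ d v t = 1.
  have := odd_dist _ _ ut; have := odd_dist _ _ tv; have := dist3_sym t v.
  have := dist3_triangle u v t; have := dist3_triangle v u t.
  have := dist3_le1 euv; have := dist3_le1 (adj_sym euv).
  by have := dist3_le3 u t; have := dist3_le3 v t; case: (dom t); lia.
have t_near w w' : d w w' = 3 -> d t w <= 1.
  move=> dww'; have [[uw vw]|notboth] := classic (d u w <= 1 /\ d v w <= 1).
    have := dist3_triangle w u w'; have := dist3_triangle w v w'.
    by have := dist3_sym u w; have := dist3_sym v w; case: (dom w'); lia.
  case: (dom w) => [uw|vw].
  - apply: (common_nbr_dist3_le1 euv dut tv uw).
    by rewrite ltnNge; apply/negP => vw; apply: notboth.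
  - apply: (common_nbr_dist3_le1 (adj_sym euv) dvt tu vw).
    by rewrite ltnNge; apply/negP => uw; apply: notboth.
have := t_near _ _ dab; have := t_near b a (etrans (dist3_sym b a) dab).
by have := dist3_triangle a t b; have := dist3_sym a t; lia.
Qed.

Lemma dD2_le5 a b u v : d a b = 3 -> dD2 u v 5.
Proof.
move=> dab; have := dist3_le3 u v.
case duv: (d u v) => [|[|[|[|//]]]] _.
- by rewrite (dist3_eq0 duv); apply: dist_le_refl.
- have [//|dom] := adj_dD2_le5_or_dominating (dist3_eq1 duv).
  exact: dominating_adj_dD2_le5 (dist3_eq1 duv) dom dab.
- by apply: dist_le_widen (dD2_edge duv) _.
- by apply: dist_le_widen (dD2_le4 duv) _.
Qed.

End DiameterThree.

End TruncatedDistance.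

Theorem theorem2p8 (T : finType) (e : rel T) :
  simple_graph e ->
  diam_eq (fun a b => e a b) 3 ->
  connected_graph (D2 e) ->
  diam_le (D2 e) 5.
Proof.
move=> [esym _] [diam3 [a [b Dab]]] D2_connected u v.
have dab : dist3 e a b = 3 by rewrite (dist3_dist Dab).
exact: dist_le_dist (dD2_le5 esym diam3 D2_connected u v dab).
Qed.
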